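(* Let $n\ge2$, $q_1,q_2\in\mathbb{C}$ with $q_1q_2\ne0$ and $q=-q_2/q_1$ not a root of unity. Let $G=\rho(B_n)\subseteq\mathrm{GL}(\mathbf{F})$ be the image of the reduced Burau representation and $\overline{G}$ its Zariski closure in $\mathrm{GL}(\mathbf{F})$. Suppose $q_1^{n-2}q_2$ is not a root of unity. Then for every $g\in G$ and every nonzero $z\in\mathbb{C}$, $zg\in\overline{G}$.
   Context: Artin's braid group $B_n$ has generators $\sigma_1,\dots,\sigma_{n-1}$ with the braid relations. $\mathbf{E}=\mathbb{C}^n$ with basis $e_1,\dots,e_n$ carries the generalized Burau representation $\sigma_ie_j=q_1e_j$ ($j\ne i,i+1$), $\sigma_ie_{i+1}=-q_2e_i$, $\sigma_ie_i=(q_1+q_2)e_i+q_1e_{i+1}$; $\mathbf{F}=\mathrm{span}\{q_2e_i+q_1e_{i+1}:1\le i\le n-1\}$ is an $(n-1)$-dimensional $B_n$-submodule and $\rho:B_n\to\mathrm{GL}(\mathbf{F})$ is the resulting action. *)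

From HB Require Import structures.
From mathcomp Require Import all_boot all_order all_algebra.
From mathcomp Require Import reals.
From mathcomp.real_closed Require Import complex.
From mathcomp Require Import mpoly.

Set Implicit Arguments.
Unset Strict Implicit.
Unset Printing Implicit Defensive.
Import Order.TTheory GRing.Theory Num.Theory.
Local Open Scope ring_scope.

Section Burau.
Variable C : comUnitRingType.

Definition not_root_of_unity (x : C) : Prop :=
  forall k : nat, (0 < k)%N -> x ^+ k != 1.

(* Matrix (column convention: column c is sigma_{i+1} e_c) of the generalized
   Burau generator sigma_{i+1} on E = C^n, for i : 'I_n.-1 (0-indexed). *)
Definition burau_sigma (n : nat) (q1 q2 : C) (i : 'I_n.-1) : 'M[C]_n :=
  \matrix_(r < n, c < n)
    if (c == i :> nat) then
      (if (r == i :> nat) then q1 + q2 else if (r == i.+1 :> nat) then q1 else 0)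
    else if (c == i.+1 :> nat) then
      (if (r == i :> nat) then - q2 else 0)
    else if (r == c :> nat) then q1 else 0.

(* Columns f_c = q2 e_c + q1 e_{c+1}, c < n-1: a basis of the submodule F. *)
Definition burau_Fbasis (n : nat) (q1 q2 : C) : 'M[C]_(n, n.-1) :=
  \matrix_(r < n, c < n.-1)
    if (r == c :> nat) then q2 else if (r == c.+1 :> nat) then q1 else 0.

(* Image of a word in the generators sigma_i^{+-1} (true = sigma_i^{-1}). *)
Definition burau_word (n : nat) (q1 q2 : C) (w : seq ('I_n.-1 * bool)) : 'M[C]_n :=
  foldr (fun a M =>
           (if a.2 then invmx (burau_sigma q1 q2 a.1) else burau_sigma q1 q2 a.1) *m M)
        1%:M w.

(* G = rho(B_n) as matrices in the basis f_1..f_{n-1} of F: the matrices R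
   with W *m Fbasis = Fbasis *m R for W the image of some braid word. *)
Definition reduced_burau_image (n : nat) (q1 q2 : C) : 'M[C]_n.-1 -> Prop :=
  fun R => exists w : seq ('I_n.-1 * bool),
      burau_word q1 q2 w *m burau_Fbasis n q1 q2 = burau_Fbasis n q1 q2 *m R.

(* Coordinates of GL_m: the m*m entries and 1/det. *)
Definition gl_coord (m : nat) (g : 'M[C]_m) (k : 'I_(m * m + 1)) : C :=
  match split k with
  | inl k' => mxvec g 0 k'
  | inr _ => (\det g)^-1
  end.

(* Zariski closure in GL_m of a set S: invertible g on which every regular
   function of GL_m (polynomial in entries and 1/det) vanishing on S
   (intersected with GL_m) vanishes. *)
Definition zariski_closure_GL (m : nat) (S : 'M[C]_m -> Prop) : 'M[C]_m -> Prop :=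
  fun g => g \in unitmx /\
    forall p : {mpoly C[m * m + 1]},
      (forall h, S h -> h \in unitmx -> p.@[gl_coord h] = 0) ->
      p.@[gl_coord g] = 0.

End Burau.
Arguments reduced_burau_image {C} n q1 q2 _.
Arguments burau_Fbasis {C} n q1 q2.
Arguments burau_sigma {C} n q1 q2 i.

(* Let delta = sigma_1 ... sigma_(n-1), so that delta ^ n is the central full
   twist.  In coordinates, F is the kernel of the form v |-> sum_c q^c v_c, and
   on this kernel delta acts as q1^(n-1) times the cyclic shift of coordinates
   twisted by q^n at the wrap-around; the n-th power of that shift is q^n.  So
   delta ^ n acts on F as the scalar c = (- q1^(n-2) q2)^n, which is not a root
   of unity, and c^k g lies in G for every k.  A regular function p vanishing
   on G is a Laurent polynomial in t along the line t g; it has the infinitely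
   many roots c^k, hence vanishes identically, and p (z g) = 0 for z <> 0. *)

From HB Require Import structures.
From mathcomp Require Import all_boot all_order all_algebra.
From mathcomp Require Import reals.
From mathcomp.real_closed Require Import complex.
From mathcomp Require Import mpoly.
From mathcomp Require Import ring zify.
From mathcomp Require boolp.

Set Implicit Arguments.
Unset Strict Implicit.
Unset Printing Implicit Defensive.
Import Order.TTheory GRing.Theory Num.Theory.
Local Open Scope ring_scope.

Lemma not_root_of_unityX (R : comUnitRingType) (x : R) m :
  (0 < m)%N -> not_root_of_unity x -> not_root_of_unity (x ^+ m).
Proof. by move=> m0 hx k k0; rewrite -exprM; apply: hx; rewrite muln_gt0 m0. Qed.

Lemma not_root_of_unityN (R : comUnitRingType) (x : R) :
  not_root_of_unity x -> not_root_of_unity (- x).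
Proof.
move=> hx k k0; apply: contra (not_root_of_unityX (isT : 0 < 2)%N hx k0).
by move=> /eqP hk; rewrite -sqrrN -exprM mulnC exprM hk expr1n.
Qed.

Lemma not_root_of_unity_expf_inj (R : idomainType) (x : R) :
  x != 0 -> not_root_of_unity x -> injective (fun k : nat => x ^+ k).
Proof.
move=> x0 hx.
suff expf_lt_neq i j : (i < j)%N -> x ^+ i != x ^+ j.
  move=> i j /= eij; case: (ltngtP i j) => // [ij | ji].
  - by move: (expf_lt_neq _ _ ij); rewrite eij eqxx.
  - by move: (expf_lt_neq _ _ ji); rewrite eij eqxx.
move=> ij; rewrite -(subnKC (ltnW ij)) exprD -{1}[x ^+ i]mulr1 eq_sym.
rewrite (inj_eq (mulfI (expf_neq0 _ x0))).
by apply: hx; rewrite subn_gt0.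
Qed.

Section ScalarLine.
Variables (F : fieldType) (m : nat).
Implicit Types (g : 'M[F]_m) (p : {mpoly F[m * m + 1]}) (a : 'X_{1.. m * m + 1}).

Definition entry_deg a := (\sum_(i < m * m) a (lshift 1 i))%N.
Definition invdet_deg a := a (rshift (m * m) ord0).

Lemma gl_coord_scale_monomial g t a : t != 0 ->
  \prod_i gl_coord (t *: g) i ^+ a i =
  t ^+ entry_deg a * (t ^+ m)^-1 ^+ invdet_deg a * \prod_i gl_coord g i ^+ a i.
Proof.
move=> t0; rewrite !big_split_ord /= !big_ord1 mulrACA; congr (_ * _).
  rewrite /entry_deg -prodrXr -big_split /=; apply: eq_bigr => i _.
  by rewrite /gl_coord (unsplitK (inl _ i)) linearZ mxE exprMn.
by rewrite /gl_coord (unsplitK (inr _ ord0)) detZ invfM exprMn.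
Qed.

Definition invdet_bound p := (\max_(a <- msupp p) invdet_deg a)%N.

(* Clearing the denominators [t ^+ m] of [1 / det (t *: g)] turns
   [t |-> p (t *: g)] into a polynomial in [t]. *)
Definition scalar_line_poly g p : {poly F} :=
  \sum_(a <- msupp p)
    (p@_a * \prod_i gl_coord g i ^+ a i) *:
      'X^(entry_deg a + m * (invdet_bound p - invdet_deg a)).

Lemma horner_scalar_line_poly g p t : t != 0 ->
  (scalar_line_poly g p).[t] =
  t ^+ (m * invdet_bound p) * p.@[gl_coord (t *: g)].
Proof.
move=> t0; rewrite mevalE horner_sum mulr_sumr; apply: eq_big_seq => a pa.
rewrite hornerZ hornerXn gl_coord_scale_monomial // exprD exprM exprVn.
have le_deg_bound : (invdet_deg a <= invdet_bound p)%N by apply: leq_bigmax_seq.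
rewrite -[in t ^+ (m * _)](subnK le_deg_bound) mulnDr exprD !exprM.
have : t ^+ m ^+ invdet_deg a != 0 by rewrite !expf_neq0.
move: (t ^+ m ^+ invdet_deg a) (t ^+ m ^+ (_ - _)) => X D X0.
by field.
Qed.

Lemma meval_gl_coord_scale_eq0 g p c : c != 0 -> not_root_of_unity c ->
  (forall k, p.@[gl_coord (c ^+ k *: g)] = 0) ->
  forall z, z != 0 -> p.@[gl_coord (z *: g)] = 0.
Proof.
move=> c0 hc pc z z0.
have line_eq0 : scalar_line_poly g p = 0.
  set Q := scalar_line_poly g p.
  apply: (@roots_geq_poly_eq0 _ _ [seq c ^+ k | k <- iota 0 (size Q)]).
  - apply/allP => _ /mapP [k _ ->].
    by rewrite /root horner_scalar_line_poly ?expf_neq0 // pc mulr0.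
  - by rewrite map_inj_uniq ?iota_uniq //; apply: not_root_of_unity_expf_inj.
  - by rewrite size_map size_iota.
apply/eqP; move: (horner_scalar_line_poly g p z0).
rewrite line_eq0 horner0 => /esym/eqP.
by rewrite mulf_eq0 expf_eq0 (negbTE z0) andbF.
Qed.

End ScalarLine.

Lemma zariski_closure_GL_scale (F : fieldType) m (S : 'M[F]_m -> Prop) g c :
  c != 0 -> not_root_of_unity c -> g \in unitmx -> (forall k, S (c ^+ k *: g)) ->
  forall z, z != 0 -> zariski_closure_GL S (z *: g).
Proof.
move=> c0 hc gU Sc z z0; split; first by rewrite unitmxZ ?unitfE.
move=> p p_vanish; apply: (meval_gl_coord_scale_eq0 c0 hc _ z0) => k.
by apply: p_vanish; rewrite ?unitmxZ ?unitfE ?expf_neq0.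
Qed.

Lemma sum_ord_if_eq (R : nmodType) n (G : 'I_n.+1 -> R) (j : nat) :
  \sum_(c < n.+1) (if (c : nat) == j then G c else 0) =
  if (j < n.+1)%N then G (inord j) else 0.
Proof.
case: ltnP => hj.
  rewrite (bigD1 (inord j)) //= inordK // eqxx big1 ?addr0 // => c.
  by rewrite -val_eqE /= inordK //; case: eqP.
rewrite big1 // => c _; case: eqP => // cj.
by move: (ltn_ord c); rewrite cj ltnNge hj.
Qed.

Lemma inj_mulmx_unitmx (F : fieldType) n (A : 'M[F]_n) :
  (forall v : 'cV_n, A *m v = 0 -> v = 0) -> A \in unitmx.
Proof.
move=> A_inj; rewrite -unitmx_tr -row_free_unit; apply: inj_row_free => u uA0.
apply: trmx_inj; rewrite trmx0; apply: A_inj.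
by rewrite -[A *m u^T]trmxK trmx_mul trmxK uA0 trmx0.
Qed.

Section BurauAction.
Variables (F : fieldType) (q1 q2 : F) (N : nat).
Local Notation q := (- q2 / q1).
Local Notation sigma := (burau_sigma N.+1 q1 q2).
Local Notation word := (@burau_word F N.+1 q1 q2).
Local Notation Fbasis := (burau_Fbasis N.+1 q1 q2).
Implicit Types (f : nat -> F) (v : 'cV[F]_N.+1).

(* Vectors of [E] as sequences vanishing beyond [N], so that shifting indices
   needs no ordinal arithmetic. *)
Definition coords v (r : nat) : F := if (r < N.+1)%N then v (inord r) 0 else 0.

Definition bounded_support f := forall r, (N < r)%N -> f r = 0.

Lemma coords_inj : injective coords.
Proof.
move=> u v uv; apply/matrixP => r c; rewrite (ord1 c).
by have := congr1 (fun f => f (r : nat)) uv; rewrite /coords ltn_ord inord_val.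
Qed.

Lemma bounded_support_coords v : bounded_support (coords v).
Proof. by move=> r Nr; rewrite /coords ltnNge Nr. Qed.

Lemma coords0 : coords 0 = fun _ => 0.
Proof. by apply: boolp.funext => r; rewrite /coords mxE; case: ifP. Qed.

Lemma coordsZ a v : coords (a *: v) = fun r => a * coords v r.
Proof.
by apply: boolp.funext => r; rewrite /coords; case: ifP; rewrite ?mxE ?mulr0.
Qed.

(* [fbasis_seq i] are the coordinates of [f_i = q2 e_i + q1 e_(i+1)], and
   [sigma_i = q1 id + f_i (e_i^* - e_(i+1)^* )]. *)
Definition fbasis_seq (i r : nat) : F :=
  (if r == i then q2 else 0) + (if r == i.+1 then q1 else 0).

Definition burau_act (i : nat) f : nat -> F :=
  fun r => q1 * f r + (f i - f i.+1) * fbasis_seq i r.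

Lemma burau_act_succ i f : burau_act i f i.+1 = q1 * f i.
Proof. by rewrite /burau_act /fbasis_seq eqxx gtn_eqF //; ring. Qed.

Lemma burau_act_out i f r : r != i -> r != i.+1 -> burau_act i f r = q1 * f r.
Proof.
by move=> /negbTE ri /negbTE ri1; rewrite /burau_act /fbasis_seq ri ri1; ring.
Qed.

Lemma burau_sigma_entry (i : 'I_N) (r c : 'I_N.+1) :
  sigma i r c =
  (if c == r :> nat then q1 else 0) +
  (if c == i :> nat then fbasis_seq i r else 0) -
  (if c == i.+1 :> nat then fbasis_seq i r else 0).
Proof.
rewrite mxE /fbasis_seq.
by do ![case: eqP => ? /=]; try (exfalso; simpl in *; lia); ring.
Qed.

Lemma coords_burau_sigma (i : 'I_N) v :
  coords (sigma i *m v) = burau_act i (coords v).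
Proof.
have lt_i : (i < N.+1)%N := ltnW (ltn_ord i).
have lt_i1 : (i.+1 < N.+1)%N by rewrite ltnS.
apply: boolp.funext => r; rewrite /burau_act /coords lt_i lt_i1.
case: ltnP => hr.
  rewrite mxE; under eq_bigr => c _ do rewrite burau_sigma_entry inordK //
    mulrBl mulrDl !(fun_if (fun x => x * v c 0)) !mul0r.
  by rewrite sumrB big_split /= !sum_ord_if_eq hr lt_i lt_i1 /fbasis_seq; ring.
by rewrite /fbasis_seq !gtn_eqF //; try lia; ring.
Qed.

(* Its kernel is [F]. *)
Definition qform f := \sum_(c < N.+1) q ^+ c * f c.

Lemma qform_fbasis_seq i : q1 != 0 -> (i < N)%N -> qform (fbasis_seq i) = 0.
Proof.
move=> q10 iN; rewrite /qform.
under eq_bigr => c _ do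
  rewrite /fbasis_seq mulrDr !(fun_if (fun x => q ^+ c * x)) !mulr0.
have [lt_i lt_i1] : (i < N.+1)%N /\ (i.+1 < N.+1)%N by split; lia.
rewrite big_split /= !sum_ord_if_eq lt_i lt_i1 !inordK //.
by rewrite exprSr -mulrA divfK // mulrN addrN.
Qed.

Lemma qform_burau_act i f : q1 != 0 -> (i < N)%N ->
  qform (burau_act i f) = q1 * qform f.
Proof.
move=> q10 iN; have := qform_fbasis_seq q10 iN; rewrite /qform /burau_act => qb0.
transitivity (q1 * \sum_(c < N.+1) q ^+ c * f c +
              (f i - f i.+1) * \sum_(c < N.+1) q ^+ c * fbasis_seq i c).
  by rewrite !mulr_sumr -big_split; apply: eq_bigr => c _ /=; ring.
by rewrite qb0 mulr0 addr0.
Qed.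

Lemma qform_foldr_burau_act s f : q1 != 0 -> all (fun i => i < N)%N s ->
  qform (foldr burau_act f s) = q1 ^+ size s * qform f.
Proof.
move=> q10; elim: s => [|i s IH] /=; first by rewrite mul1r.
by case/andP=> iN sN; rewrite qform_burau_act // IH // exprS mulrA.
Qed.

Lemma foldr_burau_act_iota f k d : bounded_support f -> (k + d = N)%N ->
  forall r, r != k ->
  foldr burau_act f (iota k d) r =
  if (r < k)%N then q1 ^+ d * f r else if (r <= N)%N then q1 ^+ d * f r.-1 else 0.
Proof.
move=> fb; elim: d k => [|d IH] k kdN r rk /=.
  rewrite addn0 in kdN; subst k; rewrite expr0 !mul1r.
  case: ltnP => // Nr; have N_lt_r : (N < r)%N by rewrite ltn_neqAle eq_sym rk.
  by rewrite leqNgt N_lt_r fb.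
have kdN' : (k.+1 + d = N)%N by lia.
case: (eqVneq r k.+1) => [-> | rk1].
  have kN : (k < N)%N by lia.
  rewrite burau_act_succ IH ?ltnSn ?(ltn_eqF (ltnSn k)) //.
  by rewrite ltnNge leqnSn kN exprS mulrA.
rewrite burau_act_out // IH // ltnS leq_eqVlt (negbTE rk) /=.
by case: ltnP => _; [|case: leqP => _]; rewrite ?mulr0 // exprS mulrA.
Qed.

Definition delta_act f := foldr burau_act f (iota 0 N).

Lemma qform_delta_act f : q1 != 0 -> qform (delta_act f) = q1 ^+ N * qform f.
Proof.
move=> q10; rewrite qform_foldr_burau_act ?size_iota //.
by apply/allP => i; rewrite mem_iota.
Qed.

Lemma bounded_support_delta_act f :
  bounded_support f -> bounded_support (delta_act f).
Proof.
move=> fb r Nr; have r0 : r != 0%N by lia.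
by rewrite /delta_act foldr_burau_act_iota // ltn0 leqNgt Nr.
Qed.

Definition twist f (r : nat) : F :=
  if r == 0%N then q ^+ N.+1 * f N else if (r <= N)%N then f r.-1 else 0.

(* On the hyperplane [qform f = 0] the coordinates [1..N] of [delta_act f]
   are shifted ones, and coordinate [0] is then forced by
   [qform (delta_act f) = 0]. *)
Lemma delta_act_twist f : q1 != 0 -> bounded_support f -> qform f = 0 ->
  delta_act f = fun r => q1 ^+ N * twist f r.
Proof.
move=> q10 fb f0; apply: boolp.funext => r; rewrite /twist /=.
have [-> /= | r0] := eqVneq r 0%N; last first.
  rewrite /delta_act (foldr_burau_act_iota fb _ r0) // ltn0.
  by case: leqP; rewrite ?mulr0.
have := qform_delta_act f q10; rewrite f0 mulr0 /qform big_ord_recl.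
under eq_bigr => c _ do
  rewrite lift0 /delta_act foldr_burau_act_iota // ltn0 ltn_ord /= exprS.
move/eqP; rewrite addr_eq0 expr0 mul1r => /eqP /= ->.
move: f0; rewrite /qform big_ord_recr /= => /eqP.
rewrite addr_eq0 => /eqP sum_lt_N.
transitivity (- (q1 ^+ N * q * \sum_(c < N) q ^+ c * f c)).
  by congr (- _); rewrite !mulr_sumr; apply: eq_bigr => c _; ring.
by rewrite sum_lt_N exprS; ring.
Qed.

Lemma twistZ a f : twist (fun r => a * f r) = fun r => a * twist f r.
Proof.
apply: boolp.funext => r; rewrite /twist.
by case: eqP => _; [|case: leqP => _]; rewrite ?mulr0 // mulrCA.
Qed.

Lemma iter_delta_act f k : q1 != 0 -> bounded_support f -> qform f = 0 ->
  iter k delta_act f = fun r => (q1 ^+ N) ^+ k * iter k twist f r.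
Proof.
move=> q10 fb f0; elim: k => [|k IH] /=.
  by apply: boolp.funext => r; rewrite mul1r.
have [gb g0] :
    bounded_support (iter k delta_act f) /\ qform (iter k delta_act f) = 0.
  elim: k {IH} => [|k [gb g0]] //=; split; first exact: bounded_support_delta_act.
  by rewrite qform_delta_act // g0 mulr0.
rewrite delta_act_twist // IH twistZ.
by apply: boolp.funext => r; rewrite exprS mulrA.
Qed.

Lemma iter_twist f k : bounded_support f -> (k <= N.+1)%N -> forall r,
  iter k twist f r = if (r < k)%N then q ^+ N.+1 * f (N.+1 - k + r)%N
                     else if (r <= N)%N then f (r - k)%N else 0.
Proof.
move=> fb; elim: k => [|k IH] kN r.
  by rewrite ltn0 subn0 /=; case: leqP => // Nr; rewrite fb.
rewrite iterS {1}/twist.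
case: r => [|r] /=.
  rewrite IH ?(ltnW kN) // ltnNge -ltnS kN leqnn /=.
  by rewrite (_ : N - k = N.+1 - k.+1 + 0)%N //; lia.
rewrite ltnS; case: (ltnP r N) => rN; last by case: ltnP => //; lia.
rewrite IH ?(ltnW kN) //; case: (ltnP r k) => rk.
  by rewrite (_ : N.+1 - k + r = N.+1 - k.+1 + r.+1)%N //; lia.
by rewrite ltnW.
Qed.

Lemma iter_twist_full f : bounded_support f ->
  iter N.+1 twist f = fun r => q ^+ N.+1 * f r.
Proof.
move=> fb; apply: boolp.funext => r; rewrite iter_twist //.
case: (ltnP r N.+1) => [_ | Nr]; first by rewrite subnn add0n.
by rewrite leqNgt Nr /= fb // mulr0.
Qed.

Lemma iter_delta_act_full f : q1 != 0 -> bounded_support f -> qform f = 0 ->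
  iter N.+1 delta_act f = fun r => (q1 ^+ N * q) ^+ N.+1 * f r.
Proof.
move=> q10 fb f0; rewrite iter_delta_act // iter_twist_full //.
by apply: boolp.funext => r /=; rewrite mulrA -exprMn.
Qed.

Lemma burau_word_cat (u w : seq ('I_N * bool)) :
  word (u ++ w) = word u *m word w.
Proof.
elim: u => [|a u IH] /=; first by rewrite mul1mx.
by rewrite /burau_word /= -/(word _) IH mulmxA.
Qed.

Lemma coords_burau_word_pos (s : seq 'I_N) v :
  coords (word [seq (i, false) | i <- s] *m v) =
  foldr burau_act (coords v) [seq val i | i <- s].
Proof.
elim: s => [|i s IH]; first by rewrite /burau_word mul1mx.
by rewrite /= /burau_word /= -/(word _) -mulmxA coords_burau_sigma IH.
Qed.

Definition delta_word : seq ('I_N * bool) :=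
  [seq (i, false) | i <- enum 'I_N].

Lemma coords_delta_word_iter k v :
  coords (word (flatten (nseq k delta_word)) *m v) = iter k delta_act (coords v).
Proof.
elim: k => [|k IH] /=; first by rewrite /burau_word mul1mx.
by rewrite burau_word_cat -mulmxA coords_burau_word_pos val_enum_ord IH.
Qed.

Definition full_twist_word := flatten (nseq N.+1 delta_word).

Lemma burau_word_full_twist v : q1 != 0 -> qform (coords v) = 0 ->
  word full_twist_word *m v = (q1 ^+ N * q) ^+ N.+1 *: v.
Proof.
move=> q10 v0; apply: coords_inj.
rewrite coords_delta_word_iter coordsZ.
exact: iter_delta_act_full q10 (bounded_support_coords v) v0.
Qed.

Lemma coords_Fbasis_col (j : 'I_N) : coords (col j Fbasis) = fbasis_seq j.
Proof.
apply: boolp.funext => r; rewrite /coords /fbasis_seq.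
have jN := ltn_ord j; case: ltnP => rN; last by rewrite !gtn_eqF ?addr0 //; lia.
rewrite !mxE inordK //.
by do 2!case: eqP => ? /=; rewrite ?addr0 ?add0r //; simpl in *; lia.
Qed.

Lemma burau_word_full_twist_Fbasis : q1 != 0 ->
  word full_twist_word *m Fbasis = (q1 ^+ N * q) ^+ N.+1 *: Fbasis.
Proof.
move=> q10; apply/matrixP => r j.
have := burau_word_full_twist (v := col j Fbasis) q10.
rewrite coords_Fbasis_col qform_fbasis_seq // => /(_ erefl).
move/(congr1 (fun M : 'cV_N.+1 => M r 0)).
by rewrite !mxE => <-; apply: eq_bigr => k _; rewrite !mxE.
Qed.

Lemma reduced_burau_image_full_twist (g : 'M[F]_N) (k : nat) : q1 != 0 ->
  reduced_burau_image N.+1 q1 q2 g ->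
  reduced_burau_image N.+1 q1 q2 (((q1 ^+ N * q) ^+ N.+1) ^+ k *: g).
Proof.
move=> q10 [w wg]; exists (flatten (nseq k full_twist_word) ++ w).
rewrite burau_word_cat -mulmxA wg mulmxA -scalemxAr scalemxAl; congr (_ *m _).
elim: k => [|k IH]; first by rewrite /burau_word /= mul1mx scale1r.
rewrite /= burau_word_cat -mulmxA IH -scalemxAr burau_word_full_twist_Fbasis //.
by rewrite scalerA -exprSr.
Qed.

Lemma burau_sigma_unit (i : 'I_N) : q1 != 0 -> q2 != 0 -> sigma i \in unitmx.
Proof.
move=> q10 q20; apply: inj_mulmx_unitmx => v sv0.
have act0 r : burau_act i (coords v) r = 0.
  by rewrite -coords_burau_sigma sv0 coords0.
have vi : coords v i = 0.
  move: (act0 i.+1); rewrite burau_act_succ => /eqP.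
  by rewrite mulf_eq0 (negbTE q10) => /eqP.
have vi1 : coords v i.+1 = 0.
  move: (act0 i); rewrite /burau_act /fbasis_seq eqxx (ltn_eqF (ltnSn i)) vi.
  move=> /eqP; rewrite mulr0 add0r sub0r addr0 mulNr oppr_eq0 mulf_eq0.
  by rewrite (negbTE q20) orbF => /eqP.
apply: coords_inj; rewrite coords0; apply: boolp.funext => r.
have [-> // | ri] := eqVneq r i; have [-> // | ri1] := eqVneq r i.+1.
move: (act0 r); rewrite burau_act_out // => /eqP.
by rewrite mulf_eq0 (negbTE q10) => /eqP.
Qed.

Lemma burau_word_unit w : q1 != 0 -> q2 != 0 -> word w \in unitmx.
Proof.
move=> q10 q20; elim: w => [|[i b] w IH]; first by rewrite /burau_word unitmx1.
rewrite /burau_word /= -/(word _) unitmx_mul IH andbT.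
by case: b; rewrite ?unitmx_inv burau_sigma_unit.
Qed.

Lemma burau_Fbasis_inj (v : 'cV[F]_N) : q2 != 0 -> Fbasis *m v = 0 -> v = 0.
Proof.
move=> q20 Fv0.
suff v0 k (c : 'I_N) : c = k :> nat -> v c 0 = 0.
  by apply/colP => c; rewrite mxE (v0 c).
elim/ltn_ind: k c => k IH c ck.
have := congr1 (fun M : 'cV_N.+1 => M (widen_ord (leqnSn N) c) 0) Fv0.
rewrite !mxE (bigD1 c) //= big1 => [|d dc].
  by rewrite !mxE eqxx addr0 => /eqP; rewrite mulf_eq0 (negbTE q20) => /eqP.
rewrite mxE /=; move: dc; rewrite eq_sym -val_eqE => /negbTE ->.
by case: ifP => [/eqP cd | _]; rewrite ?mul0r // (IH d) ?mulr0 //; lia.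
Qed.

Lemma reduced_burau_image_unit (g : 'M[F]_N) : q1 != 0 -> q2 != 0 ->
  reduced_burau_image N.+1 q1 q2 g -> g \in unitmx.
Proof.
move=> q10 q20 [w wg]; apply: inj_mulmx_unitmx => v gv0.
apply: (burau_Fbasis_inj q20).
have WFv0 : word w *m (Fbasis *m v) = 0 by rewrite mulmxA wg -mulmxA gv0 mulmx0.
by rewrite -(mulKmx (burau_word_unit w q10 q20) (Fbasis *m v)) WFv0 mulmx0.
Qed.

End BurauAction.

Theorem lemmaA2 (R : realType) (n : nat) (q1 q2 : R[i]) :
  (2 <= n)%N ->
  q1 * q2 != 0 ->
  not_root_of_unity (- q2 / q1) ->
  not_root_of_unity (q1 ^+ (n - 2) * q2) ->
  forall g : 'M[R[i]]_n.-1,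
    reduced_burau_image n q1 q2 g ->
    forall z : R[i], z != 0 ->
      zariski_closure_GL (reduced_burau_image n q1 q2) (z *: g).
Proof.
move=> n2 q12 _ + g Gg z z0.
case: n n2 g Gg => [|[|N]] // _ g Gg; rewrite !subSS subn0 => not_ru.
have [q10 q20] : q1 != 0 /\ q2 != 0 by apply/andP; rewrite -negb_or -mulf_eq0.
have central_scalar : q1 ^+ N.+1 * (- q2 / q1) = - (q1 ^+ N * q2).
  by rewrite exprSr mulNr mulrN -mulrA [q1 * _]mulrCA mulfV // mulr1.
apply: (zariski_closure_GL_scale (c := (q1 ^+ N.+1 * (- q2 / q1)) ^+ N.+2)) => //.
- by rewrite central_scalar expf_neq0 // oppr_eq0 mulf_neq0 ?expf_neq0.
- rewrite central_scalar; apply: not_root_of_unityX => //.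
  exact: not_root_of_unityN.
- exact: (reduced_burau_image_unit q10 q20 Gg).
- by move=> k; apply: (reduced_burau_image_full_twist k q10 Gg).
Qed.
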